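(* Let integers $r\ge1$, $n_i\ge1$, $l_{ij}\ge1$, $d_{ij}$ be as in the context. (i) For $0\le i\le r$ and $1\le j,j'\le n_i$ there exist integers $\alpha,\beta$ with $\nu(i,j,j')=\alpha\,\hat\nu(i,j)-\beta\,\hat\nu(i,j')$. (ii) For $0\le i_0\le r$ and $1\le j_i\le n_i$ ($i=0,\dots,r$) there exist integers $\beta_0,\dots,\beta_r$ with \[ \mu(j_0,\dots,j_r)=\beta_{i_0}\,\mu(j_0,\dots,j_{i_0-1},n_{i_0},j_{i_0+1},\dots,j_r)+\sum_{i_1\ne i_0}\beta_{i_1}\,\hat\nu(i_0,j_{i_0})\prod_{i\notin\{i_0,i_1\}}l_{ij_i}. \]
   Context: Integers $r\ge1$, $n_0,\dots,n_r\ge1$, $l_{ij}\in\mathbb{Z}_{\ge1}$, $d_{ij}\in\mathbb{Z}$ ($0\le i\le r$, $1\le j\le n_i$) with $\gcd(l_{ij},d_{ij})=1$ and $d_{i1}/l_{i1}>\dots>d_{in_i}/l_{in_i}$. Define $\mu(j_0,\dots,j_r)=\sum_{i_0=0}^r d_{i_0j_{i_0}}\prod_{i\ne i_0}l_{ij_i}$, $\nu(i,j,j')=l_{ij}d_{ij'}-l_{ij'}d_{ij}$ and $\hat\nu(i,j)=\nu(i,j,n_i)$. *)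

From mathcomp Require Import all_boot all_order all_algebra.
Set Implicit Arguments. Unset Strict Implicit. Unset Printing Implicit Defensive.
Import Order.TTheory GRing.Theory Num.Theory.
Local Open Scope ring_scope.

(* Data: indices i in {0..r} and j in {1..n i} are natural numbers;
   l d : nat -> nat -> int give l_{ij}, d_{ij} (values outside range irrelevant). *)

Definition mu (r : nat) (l d : nat -> nat -> int) (js : nat -> nat) : int :=
  \sum_(i0 < r.+1) d i0 (js i0) * \prod_(i < r.+1 | i != i0) l i (js i).

Definition nu (l d : nat -> nat -> int) (i j j' : nat) : int :=
  l i j * d i j' - l i j' * d i j.

Definition nuhat (n : nat -> nat) (l d : nat -> nat -> int) (i j : nat) : int :=
  nu l d i j (n i).

From mathcomp Require Import all_boot all_order all_algebra.
From mathcomp Require Import ring.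
Import Order.TTheory GRing.Theory Num.Theory.
Local Open Scope ring_scope.

(* Write 1 = u l_{i n_i} + v d_{i n_i} (Bezout).  Multiplying by this 1 turns
   both claims into polynomial identities.  For (ii), mu is affine in the entry
   (l, d) of row i0: mu = d_{i0 j} P + l_{i0 j} S.  The Bezout relation rewrites
   it as (u l + v d)_{i0 j} times the same form at column n_{i0}, plus
   nuhat(i0, j) (v S - u P).  Here S is already a combination of the products
   omitting rows i0 and i1, and so is P = l_k * (product omitting i0 and k) for
   any row k <> i0, which exists because r >= 1. *)

Definition lprod_but (r : nat) (l : nat -> nat -> int) (js : nat -> nat) (i0 : nat) : int :=
  \prod_(k < r.+1 | (k : nat) != i0) l k (js k).

Definition lprod_but2 (r : nat) (l : nat -> nat -> int) (js : nat -> nat)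
    (i0 : nat) (i1 : 'I_r.+1) : int :=
  \prod_(k < r.+1 | ((k : nat) != i0) && (k != i1)) l k (js k).

Definition mu_cofactor (r : nat) (l d : nat -> nat -> int) (js : nat -> nat) (i0 : nat) : int :=
  \sum_(i < r.+1 | (i : nat) != i0) d i (js i) * lprod_but2 r l js i0 i.

Set Implicit Arguments.
Unset Strict Implicit.

Lemma bezout_recombination (R : comPzRingType) (u v a' b' : R) :
  u * a' + v * b' = 1 -> forall a b x y : R,
  b * x + a * y = (u * a + v * b) * (b' * x + a' * y) + (a * b' - a' * b) * (v * y - u * x).
Proof. by move=> uv1 a b x y; rewrite -[LHS]mul1r -uv1; ring. Qed.

Lemma nu_recombination (l d : nat -> nat -> int) (u v : int) (i j j' m : nat) :
  u * l i m + v * d i m = 1 ->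
  nu l d i j j' =
    (u * l i j' + v * d i j') * nu l d i j m - (u * l i j + v * d i j) * nu l d i j' m.
Proof. by move=> uv1; rewrite /nu -[LHS]mul1r -uv1; ring. Qed.

Section MuAtRow.

Variables (r : nat) (l d : nat -> nat -> int) (i0 : nat).
Hypothesis i0_le_r : (i0 <= r)%N.

Lemma mu_split (js : nat -> nat) :
  mu r l d js = d i0 (js i0) * lprod_but r l js i0 + l i0 (js i0) * mu_cofactor r l d js i0.
Proof.
pose i0o : 'I_r.+1 := Ordinal (i0_le_r : (i0 < r.+1)%N).
rewrite /mu (bigD1 i0o) //=; congr (_ + _).
rewrite /mu_cofactor big_distrr /=; apply: eq_bigr => i i_neq_i0.
rewrite (bigD1 i0o) /=; last by rewrite eq_sym.
rewrite mulrCA /lprod_but2; congr (_ * (_ * _)); apply: eq_bigl => k; by rewrite andbC.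
Qed.

Lemma mu_set (js : nat -> nat) (j : nat) :
  mu r l d (fun i => if i == i0 then j else js i) =
  d i0 j * lprod_but r l js i0 + l i0 j * mu_cofactor r l d js i0.
Proof.
rewrite mu_split eqxx; congr (_ * _ + _ * _).
  by apply: eq_bigr => k /negbTE ->.
apply: eq_bigr => i /negbTE ->; congr (_ * _).
by apply: eq_bigr => k /andP[/negbTE -> _].
Qed.

Lemma mu_cofactor_lprod_but_comb (js : nat -> nat) (u v : int) (k : 'I_r.+1) :
  (k : nat) != i0 ->
  v * mu_cofactor r l d js i0 - u * lprod_but r l js i0 =
  \sum_(i1 < r.+1 | (i1 : nat) != i0)
     (v * d i1 (js i1) - (if i1 == k then u * l k (js k) else 0)) * lprod_but2 r l js i0 i1.
Proof.
move=> k_neq_i0.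
have -> : lprod_but r l js i0 = l k (js k) * lprod_but2 r l js i0 k.
  by rewrite /lprod_but (bigD1 k).
under eq_bigr do rewrite mulrBl.
rewrite sumrB /mu_cofactor mulr_sumr; congr (_ - _).
  by apply: eq_bigr => i _; rewrite mulrA.
rewrite (bigD1 k) //= eqxx big1 ?addr0 => [|i /andP[_ /negbTE ->]]; last by rewrite mul0r.
by rewrite mulrA.
Qed.

End MuAtRow.

Theorem lemma4p9 (r : nat) (n : nat -> nat) (l d : nat -> nat -> int) :
  (1 <= r)%N ->
  (forall i, (i <= r)%N -> (1 <= n i)%N) ->
  (forall i j, (i <= r)%N -> (1 <= j <= n i)%N -> 1 <= l i j) ->
  (forall i j, (i <= r)%N -> (1 <= j <= n i)%N -> gcdz (l i j) (d i j) = 1) ->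
  (forall i j, (i <= r)%N -> (1 <= j)%N -> (j < n i)%N ->
     (d i j)%:~R / (l i j)%:~R > (d i j.+1)%:~R / (l i j.+1)%:~R :> rat) ->
  (* (i) *)
  (forall i j j', (i <= r)%N -> (1 <= j <= n i)%N -> (1 <= j' <= n i)%N ->
     exists alpha beta : int,
       nu l d i j j' = alpha * nuhat n l d i j - beta * nuhat n l d i j') /\
  (* (ii) *)
  (forall (i0 : nat) (js : nat -> nat), (i0 <= r)%N ->
     (forall i, (i <= r)%N -> (1 <= js i <= n i)%N) ->
     exists beta : nat -> int,
       mu r l d js =
         beta i0 * mu r l d (fun i => if i == i0 then n i0 else js i)
         + \sum_(i1 < r.+1 | (i1 : nat) != i0)
             beta i1 * nuhat n l d i0 (js i0)
               * \prod_(i < r.+1 | ((i : nat) != i0) && (i != i1)) l i (js i)).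
Proof.
move=> r_ge1 n_ge1 _ coprime_ld _.
have bezout_last i : (i <= r)%N -> exists u v : int, u * l i (n i) + v * d i (n i) = 1.
  move=> i_le_r; have : coprimez (l i (n i)) (d i (n i)).
    by rewrite /coprimez coprime_ld // n_ge1 ?leqnn.
  by case/coprimezP=> -[u v] /= uv1; exists u, v.
split=> [i j j' i_le_r _ _ | i0 js i0_le_r _].
  have [u [v uv1]] := bezout_last i i_le_r.
  by exists (u * l i j' + v * d i j'), (u * l i j + v * d i j); apply: nu_recombination.
have [u [v uv1]] := bezout_last i0 i0_le_r.
have k_lt : ((i0 == 0%N) < r.+1)%N by case: (i0 == 0%N).
pose k : 'I_r.+1 := Ordinal k_lt.
have k_neq_i0 : (k : nat) != i0 by rewrite /=; case: (i0) => [|[|m]].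
exists (fun i : nat => if i == i0 then u * l i0 (js i0) + v * d i0 (js i0)
   else v * d i (js i) - (if i == (k : nat) then u * l k (js k) else 0)).
rewrite eqxx (mu_split l d i0_le_r) (mu_set l d i0_le_r).
under eq_bigr => i /negbTE i_neq_i0 do rewrite i_neq_i0 -mulrA mulrCA.
rewrite -mulr_sumr -(mu_cofactor_lprod_but_comb l d js u v k_neq_i0).
by rewrite /nuhat /nu (bezout_recombination uv1 (l i0 (js i0)) (d i0 (js i0))).
Qed.
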